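(* Let $X$ be a vector lattice and let $l : X \to \mathbb{R}$ be an order bounded linear functional with positive part $l_+ \neq 0$ and negative part $l_- \neq 0$. Then $\ker(l)$ is a Grothendieck subspace of $X$ if and only if $l_+$ and $l_-$ are Riesz homomorphisms on $X$, which in turn holds if and only if $\ker(l)$ is a Riesz subspace of $X$.
   Context: For an order bounded functional $l$, $l_+ = l \vee 0$ and $l_- = (-l)\vee 0$ in the Riesz space of order bounded functionals, so $l = l_+ - l_-$. A Riesz homomorphism is a linear functional preserving finite lattice operations. A Riesz subspace is a linear subspace closed under finite lattice operations. A linear subspace $H$ of a vector lattice is called a Grothendieck subspace (or $G$-space) if for all $x, y \in H$ one has $x \vee y \vee 0 + x \wedge y \wedge 0 \in H$. *)

From HB Require Import structures.
From mathcomp Require Import all_boot all_order all_algebra.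
From mathcomp Require Import reals.
Set Implicit Arguments. Unset Strict Implicit. Unset Printing Implicit Defensive.
Import Order.TTheory GRing.Theory Num.Theory.
Local Open Scope ring_scope.

Section VL.
Variables (R : realType) (X : lmodType R).
Variables (le : X -> X -> Prop) (join meet : X -> X -> X).

Record vector_lattice : Prop := VectorLattice {
  vl_refl : forall x, le x x;
  vl_antisym : forall x y, le x y -> le y x -> x = y;
  vl_trans : forall x y z, le x y -> le y z -> le x z;
  vl_add : forall x y z, le x y -> le (x + z) (y + z);
  vl_scale : forall (a : R) x y, 0 <= a -> le x y -> le (a *: x) (a *: y);
  vl_join_ubl : forall x y, le x (join x y);
  vl_join_ubr : forall x y, le y (join x y);
  vl_join_least : forall x y z, le x z -> le y z -> le (join x y) z;
  vl_meet_lbl : forall x y, le (meet x y) x;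
  vl_meet_lbr : forall x y, le (meet x y) y;
  vl_meet_greatest : forall x y z, le z x -> le z y -> le z (meet x y)
}.

Definition lin_functional (f : X -> R) : Prop :=
  forall (a : R) x y, f (a *: x + y) = a * f x + f y.

Definition order_bounded (f : X -> R) : Prop :=
  forall a b, exists M : R, forall x, le a x -> le x b -> `|f x| <= M.

Definition ob_functional (f : X -> R) : Prop :=
  lin_functional f /\ order_bounded f.

(* the (pointwise-on-the-positive-cone) order of the space of functionals:
   f <= g iff g - f is a positive functional *)
Definition fle (f g : X -> R) : Prop := forall x, le 0 x -> f x <= g x.

Definition is_sup_with_zero (f p : X -> R) : Prop :=
  [/\ ob_functional p, fle f p, fle (fun _ => 0) p &
      forall g, ob_functional g -> fle f g -> fle (fun _ => 0) g -> fle p g].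

Definition is_pos_part (l lp : X -> R) : Prop := is_sup_with_zero l lp.
Definition is_neg_part (l ln : X -> R) : Prop := is_sup_with_zero (fun x => - l x) ln.

Definition riesz_hom (f : X -> R) : Prop :=
  [/\ lin_functional f,
      forall x y, f (join x y) = Num.max (f x) (f y) &
      forall x y, f (meet x y) = Num.min (f x) (f y)].

Definition lin_subspace (H : X -> Prop) : Prop :=
  H 0 /\ forall (a : R) x y, H x -> H y -> H (a *: x + y).

Definition riesz_subspace (H : X -> Prop) : Prop :=
  [/\ lin_subspace H,
      forall x y, H x -> H y -> H (join x y) &
      forall x y, H x -> H y -> H (meet x y)].

Definition G_subspace (H : X -> Prop) : Prop :=
  lin_subspace H /\
  forall x y, H x -> H y -> H (join (join x y) 0 + meet (meet x y) 0).

Definition ker (f : X -> R) : X -> Prop := fun x => f x = 0.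

End VL.

(* If ker l is a G-space and u, v >= 0 are disjoint with l_+ u > 0 and
   l_+ v > 0, the Riesz-Kantorovich formula l_+ u = sup {l y | 0 <= y <= u}
   yields 0 <= a <= u and 0 <= b <= v with l a, l b > 0.  Since l_- <> 0 there
   is c >= 0 with l c < 0, and shifting a and a multiple of b by a multiple of
   c gives two positive elements of ker l whose join, a + beta b + alpha c,
   is not in ker l.  So l_+ kills one of any two disjoint positive elements,
   which makes the positive functional l_+ a Riesz homomorphism; by symmetry
   so is l_-.  Conversely, if l_+ and l_- are Riesz homomorphisms then
   ker l = ker (l_+ - l_-) is a Riesz subspace, and Riesz subspaces are
   G-spaces. *)

From mathcomp Require Import all_boot all_order all_algebra.
From mathcomp Require Import boolp classical_sets reals.
From mathcomp Require Import ring lra.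
Import Order.TTheory GRing.Theory Num.Theory.
Local Open Scope classical_set_scope.
Local Open Scope ring_scope.
Set Implicit Arguments. Unset Strict Implicit. Unset Printing Implicit Defensive.

Section LinearFunctional.
Variables (R : realType) (X : lmodType R) (f : X -> R).
Hypothesis lf : lin_functional f.

Lemma linfD x y : f (x + y) = f x + f y.
Proof. by rewrite -[x in LHS]scale1r lf mul1r. Qed.

Lemma linf0 : f 0 = 0.
Proof. by apply: (addrI (f 0)); rewrite -linfD !addr0. Qed.

Lemma linfZ a x : f (a *: x) = a * f x.
Proof. by rewrite -[a *: x]addr0 lf linf0 addr0. Qed.

Lemma linfN x : f (- x) = - f x.
Proof. by rewrite -scaleN1r linfZ mulN1r. Qed.

Lemma linfB x y : f (x - y) = f x - f y.
Proof. by rewrite linfD linfN. Qed.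

End LinearFunctional.

Section OrderBoundedFunctional.
Variables (R : realType) (X : lmodType R) (le : X -> X -> Prop).

Lemma ob_functionalD (f g : X -> R) : ob_functional le f -> ob_functional le g ->
  ob_functional le (fun x => f x + g x).
Proof.
move=> [lf bf] [lg bg]; split; first by move=> a x y; rewrite lf lg mulrDr addrACA.
move=> a b; have [M1 fM1] := bf a b; have [M2 gM2] := bg a b.
exists (M1 + M2) => x ax xb; apply: le_trans (ler_normD _ _) _.
by apply: lerD; [exact: fM1|exact: gM2].
Qed.

Lemma ob_functionalN (f : X -> R) : ob_functional le f ->
  ob_functional le (fun x => - f x).
Proof.
move=> [lf bf]; split; first by move=> a x y; rewrite lf opprD mulrN.
by move=> a b; have [M fM] := bf a b; exists M => x ax xb; rewrite normrN; apply: fM.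
Qed.

End OrderBoundedFunctional.

Section VectorLattice.
Variables (R : realType) (X : lmodType R) (le : X -> X -> Prop) (join meet : X -> X -> X).
Hypothesis VL : vector_lattice le join meet.

Lemma vl_leD2r z x y : le (x + z) (y + z) <-> le x y.
Proof. by split=> [/(vl_add VL (- z))|/(vl_add VL z)] //; rewrite !addrK. Qed.

Lemma vl_addl x y z : le x y -> le (z + x) (z + y).
Proof. by rewrite ![z + _]addrC vl_leD2r. Qed.

Lemma vl_add2 a b c d : le a b -> le c d -> le (a + c) (b + d).
Proof. by move=> /(vl_add VL c) ab /(vl_addl b); apply: (vl_trans VL) ab. Qed.

Lemma vl_addr_ge0 x y : le 0 x -> le 0 y -> le 0 (x + y).
Proof. by move=> x0 y0; rewrite -(addr0 0); apply: vl_add2. Qed.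

Lemma vl_subr_ge0 x y : le 0 (y - x) <-> le x y.
Proof. by rewrite -(vl_leD2r x) add0r subrK. Qed.

Lemma vl_leN2 x y : le (- x) (- y) <-> le y x.
Proof. by rewrite -(vl_leD2r (x + y)) addKr addrC addrK. Qed.

Lemma vl_scaler_ge0 (t : R) x : 0 <= t -> le 0 x -> le 0 (t *: x).
Proof. by move=> t0 /(vl_scale VL t0); rewrite scaler0. Qed.

Lemma vl_join_l x y : le y x -> join x y = x.
Proof.
move=> yx; apply: (vl_antisym VL); last exact: (vl_join_ubl VL).
exact: (vl_join_least VL) (vl_refl VL x) yx.
Qed.

Lemma vl_meet_l x y : le x y -> meet x y = x.
Proof.
move=> xy; apply: (vl_antisym VL); first exact: (vl_meet_lbl VL).
exact: (vl_meet_greatest VL) (vl_refl VL x) xy.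
Qed.

Lemma vl_meetC x y : meet x y = meet y x.
Proof.
by apply: (vl_antisym VL); apply: (vl_meet_greatest VL);
  [exact: (vl_meet_lbr VL)|exact: (vl_meet_lbl VL)|exact: (vl_meet_lbr VL)|exact: (vl_meet_lbl VL)].
Qed.

Lemma vl_oppr_join x y : - join x y = meet (- x) (- y).
Proof.
apply: (vl_antisym VL).
  by apply: (vl_meet_greatest VL); apply/vl_leN2;
    [exact: (vl_join_ubl VL)|exact: (vl_join_ubr VL)].
rewrite -[X in le X _]opprK; apply/vl_leN2; apply: (vl_join_least VL);
  rewrite -[X in le X _]opprK; apply/vl_leN2;
  [exact: (vl_meet_lbl VL)|exact: (vl_meet_lbr VL)].
Qed.

Lemma vl_oppr_meet x y : - meet x y = join (- x) (- y).
Proof. by rewrite -[x]opprK -[y]opprK -vl_oppr_join !opprK. Qed.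

Lemma vl_addr_join z x y : z + join x y = join (z + x) (z + y).
Proof.
apply: (vl_antisym VL); last first.
  by apply: (vl_join_least VL); apply: vl_addl;
    [exact: (vl_join_ubl VL)|exact: (vl_join_ubr VL)].
rewrite -[join (z + x) _](addNKr z); apply: vl_addl; apply: (vl_join_least VL);
  rewrite -[X in le X _](addKr z); apply: vl_addl;
  [exact: (vl_join_ubl VL)|exact: (vl_join_ubr VL)].
Qed.

Lemma vl_addr_meet z x y : z + meet x y = meet (z + x) (z + y).
Proof.
apply/oppr_inj.
by rewrite opprD vl_oppr_meet vl_addr_join -!opprD -vl_oppr_meet.
Qed.

Lemma vl_scaler_meet (t : R) x y : 0 < t -> t *: meet x y = meet (t *: x) (t *: y).
Proof.
move=> t_gt0; have t_ge0 := ltW t_gt0; have tV_ge0 : 0 <= t^-1 by rewrite invr_ge0.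
have scaleVK z : t^-1 *: (t *: z) = z by rewrite scalerA mulVf ?scale1r ?gt_eqF.
have scaleKV z : t *: (t^-1 *: z) = z by rewrite scalerA mulfV ?scale1r ?gt_eqF.
apply: (vl_antisym VL).
  by apply: (vl_meet_greatest VL); apply: (vl_scale VL) => //;
    [exact: (vl_meet_lbl VL)|exact: (vl_meet_lbr VL)].
rewrite -[meet (t *: x) _]scaleKV; apply: (vl_scale VL) => //.
by apply: (vl_meet_greatest VL); rewrite -[X in le _ X]scaleVK; apply: (vl_scale VL) => //;
  [exact: (vl_meet_lbl VL)|exact: (vl_meet_lbr VL)].
Qed.

Lemma vl_add_join_meet x y : x + y = join x y + meet x y.
Proof.
have -> : meet x y = x + y - join x y.
  by rewrite vl_oppr_join vl_addr_meet addrK addrAC subrr add0r vl_meetC.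
by rewrite [RHS]addrC subrK.
Qed.

Lemma vl_decomp x : exists a b, [/\ le 0 a, le 0 b & x = a - b].
Proof.
exists (join x 0), (join x 0 - x); split; first exact: (vl_join_ubr VL).
- by apply/vl_subr_ge0; exact: (vl_join_ubl VL).
- by rewrite opprB addrC subrK.
Qed.

Lemma vl_meet_pos_neg_part w : meet (join w 0) (join w 0 - w) = 0.
Proof.
rewrite vl_meetC -[X in meet _ X]addr0 -vl_addr_meet -[X in meet _ X]oppr0.
by rewrite -vl_oppr_join subrr.
Qed.

Lemma vl_join_disjoint a b : meet a b = 0 -> join a b = a + b.
Proof. by move=> ab; rewrite vl_add_join_meet ab addr0. Qed.

Lemma vl_disjoint_le a b u v : le 0 a -> le a u -> le 0 b -> le b v ->
  meet u v = 0 -> meet a b = 0.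
Proof.
move=> a0 au b0 bv uv; apply: (vl_antisym VL); last exact: (vl_meet_greatest VL).
rewrite -uv; apply: (vl_meet_greatest VL).
- exact: (vl_trans VL) (vl_meet_lbl VL a b) au.
- exact: (vl_trans VL) (vl_meet_lbr VL a b) bv.
Qed.

Lemma vl_disjoint_scale (t : R) a b : le 0 a -> le 0 b -> meet a b = 0 ->
  0 <= t -> meet a (t *: b) = 0.
Proof.
move=> a0 b0 ab t0; have t1_gt0 : 0 < 1 + t by rewrite ltr_pwDl.
apply: (vl_disjoint_le (u := (1 + t) *: a) (v := (1 + t) *: b)) => //.
- by rewrite scalerDl scale1r -{1}[a]addr0; apply/vl_addl/vl_scaler_ge0.
- exact: vl_scaler_ge0.
- by rewrite scalerDl scale1r -{1}[t *: b]add0r; apply: (vl_add VL).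
- by rewrite -vl_scaler_meet // ab scaler0.
Qed.

Lemma vl_subr_meet_le y x1 x2 : le 0 x2 -> le y (x1 + x2) -> le (y - meet y x1) x2.
Proof.
move=> x2_ge0 y_le; rewrite vl_oppr_meet vl_addr_join subrr.
apply: (vl_join_least VL) => //.
by rewrite -(vl_leD2r x1) subrK addrC.
Qed.

Lemma linf_eq_on_cone (f g : X -> R) : lin_functional f -> lin_functional g ->
  (forall x, le 0 x -> f x = g x) -> f = g.
Proof.
move=> lf lg fg; apply/funext => x; have [a [b [a0 b0 ->]]] := vl_decomp x.
by rewrite (linfB lf) (linfB lg) !fg.
Qed.

Lemma linf_pos_le (f : X -> R) : lin_functional f -> fle le (fun _ => 0) f ->
  forall x y, le x y -> f x <= f y.
Proof. by move=> lf f_ge0 x y /vl_subr_ge0 /f_ge0; rewrite (linfB lf) subr_ge0. Qed.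

Lemma linf_pos_order_bounded (f : X -> R) : lin_functional f ->
  fle le (fun _ => 0) f -> order_bounded le f.
Proof.
move=> lf f_ge0 a b; exists (`|f a| + `|f b|) => x ax xb.
have := linf_pos_le lf f_ge0 ax; have := linf_pos_le lf f_ge0 xb.
have := ler_norm (f b); have := ler_norm (- f a); rewrite normrN.
have := normr_ge0 (f a); have := normr_ge0 (f b).
by rewrite ler_norml => *; apply/andP; split; lra.
Qed.

Lemma sup_with_zero_sub (f P N : X -> R) : ob_functional le f ->
  is_sup_with_zero le f P -> is_sup_with_zero le (fun x => - f x) N ->
  f = (fun x => P x - N x).
Proof.
move=> obf [obP fP P_ge0 P_min] [obN fN N_ge0 N_min].
apply: linf_eq_on_cone; first by case: obf.
  by case: (ob_functionalD obP (ob_functionalN obN)).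
(* By minimality, N <= P - f and P <= f + N. *)
move=> x x0; apply/eqP; rewrite eq_le; apply/andP; split.
- have : fle le N (fun x => P x - f x).
    apply: N_min; first exact: ob_functionalD obP (ob_functionalN obf).
    + by move=> y y0; have := P_ge0 y y0; rewrite /=; lra.
    + by move=> y y0; have := fP y y0; rewrite /=; lra.
  by move/(_ x x0); lra.
- have : fle le P (fun x => f x + N x).
    apply: P_min; first exact: ob_functionalD obf obN.
    + by move=> y y0; have := N_ge0 y y0; rewrite /=; lra.
    + by move=> y y0; have := fN y y0; rewrite /=; lra.
  by move/(_ x x0); lra.
Qed.

Section ConeExtension.
Variable h : X -> R.
Hypothesis hD : forall x y, le 0 x -> le 0 y -> h (x + y) = h x + h y.
Hypothesis hZ : forall (t : R) x, 0 < t -> le 0 x -> h (t *: x) = t * h x.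

Definition cone_ext x := h (join x 0) - h (join x 0 - x).

Let h0 : h 0 = 0.
Proof. by have := hD (vl_refl VL 0) (vl_refl VL 0); rewrite addr0; lra. Qed.

Let hZ_ge0 (t : R) x : 0 <= t -> le 0 x -> h (t *: x) = t * h x.
Proof.
rewrite le_eqVlt => /predU1P [<- _|t_gt0]; last exact: hZ.
by rewrite scale0r h0 mul0r.
Qed.

Lemma cone_ext_sub a b : le 0 a -> le 0 b -> cone_ext (a - b) = h a - h b.
Proof.
move=> a0 b0; rewrite /cone_ext; set j := join (a - b) 0.
have j0 : le 0 j by exact: (vl_join_ubr VL).
have jn0 : le 0 (j - (a - b)) by apply/vl_subr_ge0; exact: (vl_join_ubl VL).
have e : j + b = j - (a - b) + a by rewrite opprB addrA subrK.
have := hD j0 b0; rewrite e hD //; lra.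
Qed.

Lemma cone_extE x : le 0 x -> cone_ext x = h x.
Proof. by move=> x0; rewrite -[x]subr0 cone_ext_sub ?h0 ?subr0 //; exact: (vl_refl VL). Qed.

Lemma cone_ext_lin : lin_functional cone_ext.
Proof.
move=> t x y; have [x1 [x2 [x10 x20 ->]]] := vl_decomp x.
have [y1 [y2 [y10 y20 ->]]] := vl_decomp y.
have [t0|t_lt0] := leP 0 t.
- have -> : t *: (x1 - x2) + (y1 - y2) = (t *: x1 + y1) - (t *: x2 + y2).
    by rewrite scalerBr addrACA opprD.
  have tx10 := vl_scaler_ge0 t0 x10; have tx20 := vl_scaler_ge0 t0 x20.
  have s10 := vl_addr_ge0 tx10 y10; have s20 := vl_addr_ge0 tx20 y20.
  by rewrite !cone_ext_sub ?hD ?hZ_ge0 //; ring.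
- have t0 : 0 <= - t by rewrite oppr_ge0 ltW.
  have -> : t *: (x1 - x2) + (y1 - y2) = (- t *: x2 + y1) - (- t *: x1 + y2).
    by rewrite scalerBr !scaleNr opprD opprK !addrA [- _ + y1 + _]addrAC [- _ + t *: x1]addrC.
  have tx10 := vl_scaler_ge0 t0 x10; have tx20 := vl_scaler_ge0 t0 x20.
  have s10 := vl_addr_ge0 tx20 y10; have s20 := vl_addr_ge0 tx10 y20.
  by rewrite !cone_ext_sub ?hD ?hZ_ge0 //; ring.
Qed.

End ConeExtension.

Section RieszKantorovich.
Variable f : X -> R.

Definition rk_sup x := sup [set f y | y in [set y | le 0 y /\ le y x]].

Variable P : X -> R.
Hypotheses (lf : lin_functional f) (fP : is_sup_with_zero le f P).

Let lP : lin_functional P. Proof. by case: fP => [[]]. Qed.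
Let P_ge_f : fle le f P. Proof. by case: fP. Qed.
Let P_ge0 : fle le (fun _ => 0) P. Proof. by case: fP. Qed.

Lemma rk_sup_ub x y : le 0 y -> le y x -> f y <= rk_sup x.
Proof.
move=> y0 yx; apply: ub_le_sup; last by exists y.
exists (P x) => _ [z [z0 zx] <-].
exact: le_trans (P_ge_f z0) (linf_pos_le lP P_ge0 zx).
Qed.

Lemma rk_sup_le x b : le 0 x ->
  (forall y, le 0 y -> le y x -> f y <= b) -> rk_sup x <= b.
Proof.
move=> x0 fb; apply: ge_sup; first by exists (f 0), 0 => //; split=> //; exact: (vl_refl VL).
by move=> _ [y [y0 yx] <-]; exact: fb.
Qed.

Lemma rk_sup_ge0 x : le 0 x -> 0 <= rk_sup x.
Proof. by move=> x0; rewrite -(linf0 lf); apply: rk_sup_ub => //; exact: (vl_refl VL). Qed.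

Lemma rk_supD x1 x2 : le 0 x1 -> le 0 x2 ->
  rk_sup (x1 + x2) = rk_sup x1 + rk_sup x2.
Proof.
move=> x10 x20; have x12 := vl_addr_ge0 x10 x20.
apply/eqP; rewrite eq_le; apply/andP; split.
  apply: rk_sup_le => // y y0 yx.
  (* Riesz decomposition: meet y x1 lies in [0, x1] and y - meet y x1 in [0, x2]. *)
  rewrite -(subrK (meet y x1) y) (linfD lf) [rk_sup x1 + _]addrC.
  apply: lerD; apply: rk_sup_ub.
  - by apply/vl_subr_ge0; exact: (vl_meet_lbl VL).
  - exact: vl_subr_meet_le.
  - exact: (vl_meet_greatest VL).
  - exact: (vl_meet_lbr VL).
have rk_addl y1 : le 0 y1 -> le y1 x1 -> f y1 + rk_sup x2 <= rk_sup (x1 + x2).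
  move=> y10 y1x; rewrite addrC -lerBrDr; apply: rk_sup_le => // y2 y20 y2x.
  rewrite lerBrDr -(linfD lf) addrC.
  by apply: rk_sup_ub; [exact: vl_addr_ge0|exact: vl_add2].
rewrite -lerBrDr; apply: rk_sup_le => // y1 y10 y1x.
by rewrite lerBrDr; exact: rk_addl.
Qed.

Lemma rk_sup_scale_le (t : R) x : 0 < t -> le 0 x -> rk_sup (t *: x) <= t * rk_sup x.
Proof.
move=> t_gt0 x0; apply: rk_sup_le => [|y y0 yx]; first exact: vl_scaler_ge0 (ltW t_gt0) x0.
have tV_ge0 : 0 <= t^-1 by rewrite invr_ge0 ltW.
rewrite -[y](scalerKV (lt0r_neq0 t_gt0)) (linfZ lf) ler_pM2l //.
apply: rk_sup_ub; first exact: vl_scaler_ge0.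
by rewrite -[x](scalerK (lt0r_neq0 t_gt0)); exact: (vl_scale VL).
Qed.

Lemma rk_supZ (t : R) x : 0 < t -> le 0 x -> rk_sup (t *: x) = t * rk_sup x.
Proof.
move=> t_gt0 x0; apply/eqP; rewrite eq_le rk_sup_scale_le //=.
have tV_gt0 : 0 < t^-1 by rewrite invr_gt0.
have := rk_sup_scale_le tV_gt0 (vl_scaler_ge0 (ltW t_gt0) x0).
by rewrite scalerK ?lt0r_neq0 // ler_pdivlMl.
Qed.

Lemma sup_with_zero_rk x : le 0 x -> P x = rk_sup x.
Proof.
move=> x0; apply/eqP; rewrite eq_le; apply/andP; split; last first.
  by apply: rk_sup_le => // y y0 yx; exact: le_trans (P_ge_f y0) (linf_pos_le lP P_ge0 yx).
(* The linear extension of rk_sup is positive and lies above f, hence above P. *)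
have lg := cone_ext_lin rk_supD rk_supZ.
have gE := cone_extE rk_supD.
have g_ge0 : fle le (fun _ => 0) (cone_ext rk_sup).
  by move=> y y0; rewrite gE //; exact: rk_sup_ge0.
have : fle le P (cone_ext rk_sup).
  case: fP => _ _ _; apply=> //; first by split; [|exact: linf_pos_order_bounded].
  by move=> y y0; rewrite gE //; apply: rk_sup_ub => //; exact: (vl_refl VL).
by move=> /(_ x x0); rewrite gE.
Qed.

Lemma sup_with_zero_witness u : le 0 u -> 0 < P u ->
  exists y, [/\ le 0 y, le y u & 0 < f y].
Proof.
move=> u0; rewrite sup_with_zero_rk // => /sup_gt [].
  by exists (f 0), 0 => //; split=> //; exact: (vl_refl VL).
by move=> _ [y [y0 yu] <-] fy; exists y.
Qed.

Lemma sup_with_zero_neq0 : P <> (fun _ => 0) -> exists y, le 0 y /\ 0 < f y.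
Proof.
move=> P_neq0; apply/not_existsP => no_pos; apply: P_neq0.
apply: linf_eq_on_cone => //; first by move=> a x y; rewrite mulr0 addr0.
move=> x x0; apply/eqP; rewrite eq_le P_ge0 // andbT leNgt; apply/negP => Px.
by have [y [y0 _ fy]] := sup_with_zero_witness x0 Px; apply: (no_pos y).
Qed.

End RieszKantorovich.

Lemma G_subspace_ker_disjoint (f : X -> R) c a b : lin_functional f ->
  G_subspace join meet (ker f) -> le 0 c -> f c < 0 ->
  le 0 a -> le 0 b -> meet a b = 0 -> 0 < f a -> f b <= 0.
Proof.
move=> lf [_ G] c0 fc a0 b0 ab fa; rewrite leNgt; apply/negP => fb.
set beta := f a / f b; set alpha := f a / - f c.
have beta_ge0 : 0 <= beta by rewrite ltW ?divr_gt0.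
have alpha_ge0 : 0 <= alpha by rewrite ltW ?divr_gt0 ?oppr_gt0.
have fbeta : beta * f b = f a by rewrite /beta divfK ?lt0r_neq0.
have falpha : alpha * f c = - f a by rewrite /alpha invrN mulrN mulNr divfK ?ltr0_neq0.
have ac0 := vl_scaler_ge0 alpha_ge0 c0.
(* x and y are positive elements of ker f, so the G-space condition puts
   join x y = alpha c + a + beta b into ker f, yet f takes the value f a there. *)
set x := a + alpha *: c; set y := beta *: b + alpha *: c.
have x0 : le 0 x by exact: vl_addr_ge0.
have y0 : le 0 y by apply: vl_addr_ge0 => //; exact: vl_scaler_ge0.
have := G x y; rewrite /ker !(linfD lf) !(linfZ lf) falpha fbeta subrr => /(_ erefl erefl).
have xy0 : le 0 (join x y) by exact: (vl_trans VL) x0 (vl_join_ubl VL x y).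
rewrite vl_join_l // vl_meetC vl_meet_l; last exact: (vl_meet_greatest VL).
rewrite (linf0 lf) addr0 /x /y ![_ + alpha *: c]addrC -vl_addr_join.
rewrite vl_join_disjoint ?vl_disjoint_scale // !(linfD lf) !(linfZ lf) falpha fbeta.
lra.
Qed.

Lemma riesz_hom_of_disjoint (P : X -> R) : lin_functional P -> fle le (fun _ => 0) P ->
  (forall u v, le 0 u -> le 0 v -> meet u v = 0 -> P u = 0 \/ P v = 0) ->
  riesz_hom join meet P.
Proof.
move=> lP P_ge0 P_disj.
have P_join x y : P (join x y) = Num.max (P x) (P y).
  have w_pos := vl_join_ubr VL (x - y) 0.
  have w_neg : le 0 (join (x - y) 0 - (x - y)).
    by apply/vl_subr_ge0; exact: (vl_join_ubl VL).
  have -> : join x y = y + join (x - y) 0 by rewrite vl_addr_join addrCA subrr !addr0.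
  have := P_disj _ _ w_pos w_neg (vl_meet_pos_neg_part _).
  move: (P_ge0 _ w_pos) (P_ge0 _ w_neg); rewrite !(linfB lP) (linfD lP).
  by case: (leP (P x) (P y)); lra.
split=> // x y; have := congr1 P (vl_add_join_meet x y).
by rewrite !(linfD lP) P_join; case: (leP (P x) (P y)); lra.
Qed.

Lemma G_subspace_ker_riesz_hom (f P : X -> R) c : lin_functional f ->
  is_sup_with_zero le f P -> le 0 c -> f c < 0 ->
  G_subspace join meet (ker f) -> riesz_hom join meet P.
Proof.
move=> lf fP c0 fc G; have [[lP _] _ P_ge0 _] := fP.
apply: riesz_hom_of_disjoint => // u v u0 v0 uv.
have [Pu0|Pu_neq0] := eqVneq (P u) 0; [by left | right].
apply/eqP; rewrite eq_le P_ge0 // andbT leNgt; apply/negP => Pv_gt0.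
have Pu_gt0 : 0 < P u by rewrite lt_def Pu_neq0 P_ge0.
have [a [a0 au fa]] := sup_with_zero_witness lf fP u0 Pu_gt0.
have [b [b0 bv fb]] := sup_with_zero_witness lf fP v0 Pv_gt0.
have := G_subspace_ker_disjoint lf G c0 fc a0 b0 (vl_disjoint_le a0 au b0 bv uv) fa.
by rewrite leNgt fb.
Qed.

End VectorLattice.

Section KernelSubspaces.
Variables (R : realType) (X : lmodType R) (join meet : X -> X -> X).

Lemma ker_oppr (f : X -> R) : ker (fun x => - f x) = ker f.
Proof.
apply/funext => x; apply/propext; rewrite /ker.
by split=> [/(congr1 -%R)|->]; rewrite ?opprK ?oppr0.
Qed.

Lemma lin_subspace_ker (f : X -> R) : lin_functional f -> lin_subspace (ker f).
Proof. by move=> lf; split=> [|a x y]; rewrite /ker ?(linf0 lf) // lf => -> ->; rewrite mulr0 addr0. Qed.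

Lemma riesz_subspace_ker_sub (p n : X -> R) : riesz_hom join meet p ->
  riesz_hom join meet n -> riesz_subspace join meet (ker (fun x => p x - n x)).
Proof.
move=> [lp p_join p_meet] [ln n_join n_meet].
have pn x : ker (fun x => p x - n x) x -> p x = n x.
  by rewrite /ker => /eqP; rewrite subr_eq0 => /eqP.
split.
- by apply: lin_subspace_ker => a x y; rewrite lp ln; ring.
- by move=> x y /pn ex /pn ey; rewrite /ker p_join n_join ex ey subrr.
- by move=> x y /pn ex /pn ey; rewrite /ker p_meet n_meet ex ey subrr.
Qed.

Lemma riesz_subspace_G_subspace (H : X -> Prop) :
  riesz_subspace join meet H -> G_subspace join meet H.
Proof.
move=> [[H0 HD] H_join H_meet]; split=> [|x y Hx Hy]; first by split.
have := HD 1 _ _ (H_join _ _ (H_join _ _ Hx Hy) H0) (H_meet _ _ (H_meet _ _ Hx Hy) H0).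
by rewrite scale1r.
Qed.

End KernelSubspaces.

Theorem lemma2 (R : realType) (X : lmodType R)
    (le : X -> X -> Prop) (join meet : X -> X -> X)
    (l lp ln : X -> R) :
  vector_lattice le join meet ->
  ob_functional le l ->
  is_pos_part le l lp ->
  is_neg_part le l ln ->
  lp <> (fun _ => 0) ->
  ln <> (fun _ => 0) ->
  (G_subspace join meet (ker l) <-> (riesz_hom join meet lp /\ riesz_hom join meet ln)) /\
  ((riesz_hom join meet lp /\ riesz_hom join meet ln) <-> riesz_subspace join meet (ker l)).
Proof.
move=> VL obl l_pos l_neg lp_neq0 ln_neq0.
have [ll _] := obl; have [lNl _] := ob_functionalN obl.
have [c [c0 lc]] := sup_with_zero_neq0 VL lNl l_neg ln_neq0.
have [d [d0 ld]] := sup_with_zero_neq0 VL ll l_pos lp_neq0.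
have G_hom : G_subspace join meet (ker l) ->
    riesz_hom join meet lp /\ riesz_hom join meet ln.
  move=> G; split.
    by apply: (G_subspace_ker_riesz_hom VL ll l_pos c0) => //; rewrite -oppr_gt0.
  apply: (G_subspace_ker_riesz_hom VL lNl l_neg d0); first by rewrite oppr_lt0.
  by rewrite ker_oppr.
have hom_riesz : riesz_hom join meet lp /\ riesz_hom join meet ln ->
    riesz_subspace join meet (ker l).
  by case=> hp hn; rewrite (sup_with_zero_sub VL obl l_pos l_neg); exact: riesz_subspace_ker_sub.
split; split=> //.
- by move=> /hom_riesz /riesz_subspace_G_subspace.
- by move=> /riesz_subspace_G_subspace /G_hom.
Qed.
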